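(* Let $X$ be a compact metric space with metric $d$, let $f\colon X\to X$ be a continuous map with the s-limit shadowing property, let $C\in\mathcal{C}(f)$ and $D\in\mathcal{D}(C)$, and let $\mathcal{G}$ be a full Furstenberg family. Then for every $n\ge2$, the set \[ B=\bigcap_{\epsilon>0}\{(x_1,\dots,x_n)\in[V^s(D)]^n\colon T_f(x_1,\dots,x_n;\epsilon)\in\mathcal{G}\} \] is a dense subset of $[V^s(D)]^n$.
   Context: A $\delta$-chain of $f$ ($\delta>0$) is a finite sequence $(x_i)_{i=0}^k$, $k\ge1$, of points of $X$ with $d(f(x_i),x_{i+1})\le\delta$ for $0\le i\le k-1$; it is a $\delta$-cycle if $x_0=x_k$, and $k$ is its length. Write $x\to y$ if for every $\delta>0$ there is a $\delta$-chain from $x$ to $y$. Let $CR(f)=\{x\in X\colon x\to x\}$; on $CR(f)$ let $x\leftrightarrow y$ iff $x\to y$ and $y\to x$. The equivalence classes of $\leftrightarrow$ are the chain components; $\mathcal{C}(f)$ is the set of chain components. For $C\in\mathcal{C}(f)$ and $\delta>0$, let $m=m(C,\delta)$ be the greatest common divisor of the lengths of all $\delta$-cycles of $f|_C$ (chains consisting of points of $C$), and for $x,y\in C$ let $x\sim_{C,\delta}y$ iff there is a $\delta$-chain $(x_i)_{i=0}^k$ of $f|_C$ with $x_0=x$, $x_k=y$ and $m\mid k$; this is an equivalence relation on $C$, and $\mathcal{D}(C,\delta)$ denotes its (finitely many) equivalence classes. Let $x\sim_C y$ iff $x\sim_{C,\delta}y$ for all $\delta>0$, and let $\mathcal{D}(C)$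 be the set of equivalence classes of $\sim_C$. For $D\in\mathcal{D}(C)$ and $\delta>0$, let $D_\delta$ be the unique element of $\mathcal{D}(C,\delta)$ containing $D$. Define $W^s(C)=\{x\in X\colon\lim_{i\to\infty}d(f^i(x),C)=0\}$ and \[ V^s(D)=\bigcap_{\delta>0}\{x\in W^s(C)\colon\lim_{i\to\infty}d(f^i(x),f^i(D_\delta))=0\}, \] where $d(p,A)=\inf_{a\in A}d(p,a)$. A sequence $(x_i)_{i\ge0}$ is a $\delta$-limit-pseudo orbit if $d(f(x_i),x_{i+1})\le\delta$ for all $i$ and $d(f(x_i),x_{i+1})\to0$; it is $\epsilon$-limit shadowed by $x$ if $d(f^i(x),x_i)\le\epsilon$ for all $i\ge0$ and $d(f^i(x),x_i)\to0$. $f$ has the s-limit shadowing property if for every $\epsilon>0$ there is $\delta>0$ such that every $\delta$-limit-pseudo orbit of $f$ is $\epsilon$-limit shadowed by some point of $X$. A Furstenberg family is a nonempty proper family $\mathcal{F}\subsetneq 2^{\mathbb{N}_0}$ ($\mathbb{N}_0=\{0,1,2,\dots\}$) that is hereditary upward ($A\in\mathcal{F}$, $A\subset B$ implies $B\in\mathcal{F}$). It is full if $\{i\in A\colon i\ge n\}\in\mathcal{F}$ for all $A\in\mathcal{F}$ and $n\ge0$. For $x_1,\dots,x_n\in X$ and $r>0$, $T_f(x_1,\dots,x_n;r)=\{i\in\mathbb{N}_0\colon\max_{1\le j<k\le n}d(f^i(x_j),f^i(x_k))<r\}$. *)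

From HB Require Import structures.
From mathcomp Require Import all_boot all_order all_algebra.
From mathcomp Require Import all_classical all_reals all_analysis.
Set Implicit Arguments. Unset Strict Implicit. Unset Printing Implicit Defensive.
Import Order.TTheory GRing.Theory Num.Theory numFieldNormedType.Exports.
Local Open Scope classical_set_scope.
Local Open Scope ring_scope.

Section Dyn.
Context {R : realType} {X : metricType R}.
Local Notation d := (@mdist R X).

Definition dist_set (p : X) (A : set X) : R := inf [set d p a | a in A].

Definition chain_in (A : set X) (f : X -> X) (delta : R) (s : nat -> X) (k : nat) : Prop :=
  (1 <= k)%N /\ (forall i, (i <= k)%N -> A (s i)) /\
  (forall i, (i < k)%N -> d (f (s i)) (s i.+1) <= delta).

Definition chain_rel (f : X -> X) (x y : X) : Prop :=
  forall delta : R, 0 < delta ->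
    exists s k, chain_in setT f delta s k /\ s 0%N = x /\ s k = y.

Definition CR (f : X -> X) : set X := [set x | chain_rel f x x].

Definition chain_component (f : X -> X) (C : set X) : Prop :=
  exists x, CR f x /\
    C = [set y | CR f y /\ chain_rel f x y /\ chain_rel f y x].

Definition cycle_lengths (f : X -> X) (C : set X) (delta : R) : set nat :=
  [set k | exists s, chain_in C f delta s k /\ s 0%N = s k].

Definition is_gcd_set (L : set nat) (m : nat) : Prop :=
  (forall k, L k -> (m %| k)%N) /\
  (forall m', (forall k, L k -> (m' %| k)%N) -> (m' %| m)%N).

Definition sim_Cd (f : X -> X) (C : set X) (delta : R) (x y : X) : Prop :=
  exists m, is_gcd_set (cycle_lengths f C delta) m /\
    exists s k, chain_in C f delta s k /\ s 0%N = x /\ s k = y /\ (m %| k)%N.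

Definition in_DC (f : X -> X) (C D : set X) : Prop :=
  exists x, C x /\
    D = [set y | C y /\ forall delta : R, 0 < delta -> sim_Cd f C delta x y].

(* D_delta: the element of D(C,delta) containing D *)
Definition D_delta (f : X -> X) (C D : set X) (delta : R) : set X :=
  [set y | C y /\ exists x, D x /\ sim_Cd f C delta x y].

Definition Ws (f : X -> X) (C : set X) : set X :=
  [set x | (fun i => dist_set (iter i f x) C) @ \oo --> (0 : R)].

Definition Vs (f : X -> X) (C D : set X) : set X :=
  [set x | Ws f C x /\ forall delta : R, 0 < delta ->
     (fun i => dist_set (iter i f x) (iter i f @` D_delta f C D delta)) @ \oo --> (0 : R)].

Definition s_limit_shadowing (f : X -> X) : Prop :=
  forall eps : R, 0 < eps -> exists2 delta : R, 0 < delta &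
    forall xs : nat -> X,
      (forall i, d (f (xs i)) (xs i.+1) <= delta) ->
      (fun i => d (f (xs i)) (xs i.+1)) @ \oo --> (0 : R) ->
      exists x : X, (forall i, d (iter i f x) (xs i) <= eps) /\
        (fun i => d (iter i f x) (xs i)) @ \oo --> (0 : R).

Definition T_f (f : X -> X) (n : nat) (x : 'I_n -> X) (r : R) : set nat :=
  [set i | forall j k : 'I_n, (j < k)%N -> d (iter i f (x j)) (iter i f (x k)) < r].

End Dyn.

Definition furstenberg_family (F : set (set nat)) : Prop :=
  F !=set0 /\ F <> setT /\ (forall A B, F A -> A `<=` B -> F B).

Definition full_family (F : set (set nat)) : Prop :=
  forall A, F A -> forall n : nat, F [set i | A i /\ (n <= i)%N].

From HB Require Import structures.
From mathcomp Require Import all_boot all_order all_algebra.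
From mathcomp Require Import all_classical all_reals all_analysis.
From mathcomp Require Import zify ring lra.
Import Order.TTheory GRing.Theory Num.Theory numFieldNormedType.Exports.
Local Open Scope classical_set_scope.
Local Open Scope ring_scope.
Set Implicit Arguments. Unset Strict Implicit. Unset Printing Implicit Defensive.

(** Fix y_1, ..., y_n in V^s(D) and put z = y_1.  The heart of the proof is
  that for every delta > 0 there is K such that, for p, q in D_delta and
  T >= N + K, the points f^N(p) and f^T(q) are joined by a delta-chain in C of
  length exactly T - N: lengths of delta-chains between points of D_delta are
  determined modulo m = m(C, delta), every large multiple of m is the length of
  a delta-cycle through a point of D (an additive submonoid of N contains all
  large multiples of its gcd), and by compactness the chains needed to enter
  and leave that point have bounded lengths.  Consequently each y_j is joined
  by a delta-chain of some length T to f^T(z); continued along the orbit of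
  f^T(z) it becomes a delta-limit-pseudo orbit, and a point x_j that limit
  shadows it is close to y_j and asymptotic to z.  Such points lie in V^s(D),
  and since they are pairwise asymptotic, T_f(x_1, ..., x_n; eps) contains a
  tail of N_0, which belongs to every full family. *)

Section Topology.
Context {R : realType} {X : metricType R}.
Local Notation d := (@mdist R X).

Lemma continuous_mdist_lt (f : X -> X) : continuous f -> forall x (e : R),
  0 < e -> exists2 r : R, 0 < r & forall z, d x z < r -> d (f x) (f z) < e.
Proof.
move=> hf x e e0; have := hf x.
move/metricType_numDomainType.cvgrPdist_lt => /(_ e e0).
by move/metricType_numDomainType.nbhs_mdistP => [r r0 H]; exists r.
Qed.

Lemma compact_monotone_cover (P : nat -> X -> Prop) : compact [set: X] ->
  (forall k k' x, (k <= k')%N -> P k x -> P k' x) ->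
  (forall y, exists k, exists2 r : R, 0 < r & forall x, d y x < r -> P k x) ->
  exists k, forall x, P k x.
Proof.
move=> hX Pmono Ploc; apply: contrapT => noK.
have /choice [s Hs] : forall k, exists x, ~ P k x.
  move=> k; apply: contrapT => nH; apply: noK; exists k => x.
  by apply: contrapT => nP; apply: nH; exists x.
have [y [_ Hy]] := hX (s @ \oo) _ filterT.
have [k [r r0 Hr]] := Ploc y.
have tail : (s @ \oo) [set s i | i in [set i | (k <= i)%N]].
  by exists k => // i /= ki; exists i.
have ball : nbhs y [set x | d y x < r].
  by apply/metricType_numDomainType.nbhs_mdistP; exists r.
have [_ [[i /= ki <-] yi]] := Hy _ _ tail ball.
by apply: (Hs i); apply: (Pmono k) => //; apply: Hr.
Qed.

End Topology.

Section DeltaChains.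
Context {R : realType} {X : metricType R} (f : X -> X).
Local Notation d := (@mdist R X).

(* An inductive form of [chain_in] that also admits chains of length 0. *)
Inductive dchain (A : set X) (e : R) : X -> X -> nat -> Prop :=
| dchain0 x : A x -> dchain A e x x 0
| dchainS x y z k :
    dchain A e x y k -> A z -> d (f y) z <= e -> dchain A e x z k.+1.
Arguments dchain0 {A e x}.
Arguments dchainS {A e x y z k}.

Lemma dchain_ends A e x y k : dchain A e x y k -> A x /\ A y.
Proof. by elim=> // x0 y0 z0 k0 _ [] *; split. Qed.

Lemma dchain_cat A e x y z k1 k2 :
  dchain A e x y k1 -> dchain A e y z k2 -> dchain A e x z (k1 + k2).
Proof.
move=> H1 H2; elim: H2 H1 => [y0 _|y0 w z0 k0 _ IH Az dz H1].
  by rewrite addn0.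
by rewrite addnS; apply: dchainS (IH H1) Az dz.
Qed.

Lemma dchain_sub A B e e' x y k :
  A `<=` B -> e <= e' -> dchain A e x y k -> dchain B e' x y k.
Proof.
move=> AB ee'; elim=> [x0 Ax|x0 w z0 k0 _ IH Az dz].
  by apply: dchain0; apply: AB.
exact: dchainS IH (AB _ Az) (le_trans dz ee').
Qed.

Lemma dchain0_eq A e x y : dchain A e x y 0 -> x = y.
Proof. by move=> H; inversion H. Qed.

Lemma dchain_last A e x z k : dchain A e x z k.+1 ->
  exists y, [/\ dchain A e x y k, A z & d (f y) z <= e].
Proof. by move=> H; inversion H; subst; eexists; split; eassumption. Qed.

Lemma dchain1 A e x y : A x -> A y -> d (f x) y <= e -> dchain A e x y 1.
Proof. by move=> Ax Ay xy; apply: dchainS (dchain0 Ax) Ay xy. Qed.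

Lemma dchain_cons A e x y z k :
  A x -> d (f x) y <= e -> dchain A e y z k -> dchain A e x z k.+1.
Proof.
move=> Ax xy H; have [Ay _] := dchain_ends H.
by have := dchain_cat (dchain1 Ax Ay xy) H; rewrite add1n.
Qed.

Lemma dchain_first A e x z k : dchain A e x z k.+1 ->
  exists y, [/\ A x, d (f x) y <= e & dchain A e y z k].
Proof.
elim: k z => [|k IH] z /dchain_last [y [H Az yz]].
  rewrite (dchain0_eq H); exists z.
  by split => //; [case: (dchain_ends H)|apply: dchain0].
have [w [Ax xw Hw]] := IH _ H.
by exists w; split => //; apply: dchainS Hw Az yz.
Qed.

Lemma dchain_move_last A e e' x y y' k :
  dchain A e x y k.+1 -> A y' -> d y y' <= e' -> dchain A (e + e') x y' k.+1.
Proof.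
move=> /dchain_last [w [Hw Ay wy]] Ay' yy'.
have e'0 : 0 <= e' by apply: le_trans (mdist_ge0 _ _) yy'.
apply: dchainS (dchain_sub _ _ Hw) Ay' _ => //; first by rewrite lerDl.
by rewrite (le_trans (metric_triangle _ y _)) // lerD.
Qed.

Lemma dchain_move_first A e e' x y y' k : dchain A e y x k.+1 -> A y' ->
  d (f y') (f y) <= e' -> dchain A (e + e') y' x k.+1.
Proof.
move=> /dchain_first [w [Ay yw Hw]] Ay' yy'.
have e'0 : 0 <= e' by apply: le_trans (mdist_ge0 _ _) yy'.
apply: dchain_cons Ay' _ (dchain_sub _ _ Hw) => //; last by rewrite lerDl.
by rewrite (le_trans (metric_triangle _ (f y) _)) // addrC lerD.
Qed.

Lemma dchain_orbit A e x k : 0 <= e ->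
  (forall i, (i <= k)%N -> A (iter i f x)) -> dchain A e x (iter k f x) k.
Proof.
move=> e0; elim: k => [|k IH] HA; first by apply: dchain0; apply: (HA 0%N).
apply: dchainS (IH _) (HA _ _) _ => //; last by rewrite iterS mdistxx.
by move=> i ik; apply: HA; rewrite (leq_trans ik).
Qed.

Lemma dchain_seq A e x y k : dchain A e x y k -> exists s : nat -> X,
  [/\ s 0%N = x, s k = y, (forall i, (i <= k)%N -> A (s i)) &
      (forall i, (i < k)%N -> d (f (s i)) (s i.+1) <= e)].
Proof.
elim=> [x0 Ax|x0 w z k0 _ [s [s0 sk sA sd]] Az dz].
  by exists (fun=> x0); split => // i; rewrite leqn0 => /eqP ->.
exists (fun i => if (i <= k0)%N then s i else z); split.
- by rewrite leq0n.
- by rewrite ltnn.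
- by move=> i _; case: ifP => // /sA.
- move=> i ik; case: ifP => [ik0|/negbT]; last by lia.
  case: ifP => [ik1|/negbT ki]; first by apply: sd; lia.
  have -> : i = k0 by lia.
  by rewrite sk.
Qed.

Lemma seq_dchain A e (s : nat -> X) k :
  (forall i, (i <= k)%N -> A (s i)) ->
  (forall i, (i < k)%N -> d (f (s i)) (s i.+1) <= e) ->
  dchain A e (s 0%N) (s k) k.
Proof.
elim: k => [|k IH] sA sd; first by apply: dchain0; apply: sA.
apply: dchainS (IH _ _) (sA _ _) (sd _ _) => //.
- by move=> i ik; apply: sA; rewrite (leq_trans ik).
- by move=> i ik; apply: sd; rewrite (ltn_trans ik).
Qed.

Lemma chain_in_dchain A e s k :
  chain_in A f e s k -> dchain A e (s 0%N) (s k) k.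
Proof. by move=> [_ [sA sd]]; apply: seq_dchain. Qed.

Lemma dchain_chain_in A e x y k : (0 < k)%N -> dchain A e x y k ->
  exists s, [/\ chain_in A f e s k, s 0%N = x & s k = y].
Proof. by move=> k0 /dchain_seq [s [s0 sk sA sd]]; exists s. Qed.

Definition reach e x y := exists2 k, (0 < k)%N & dchain setT e x y k.

Lemma chain_relP x y : chain_rel f x y <-> forall e, 0 < e -> reach e x y.
Proof.
split=> H e e0.
  have [s [k [Hs [<- <-]]]] := H e e0.
  by exists k; [case: Hs | exact: chain_in_dchain].
have [k k0 Hk] := H e e0; have [s [Hs s0 sk]] := dchain_chain_in k0 Hk.
by exists s, k.
Qed.

Lemma reach1 e x y : d (f x) y <= e -> reach e x y.
Proof. by move=> xy; exists 1%N => //; apply: dchain1. Qed.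

Lemma reach_trans e x y z : reach e x y -> reach e y z -> reach e x z.
Proof.
move=> [k1 k10 H1] [k2 _ H2]; exists (k1 + k2)%N; first exact: ltn_addr.
exact: dchain_cat H1 H2.
Qed.

Lemma reach_le e e' x y : e <= e' -> reach e x y -> reach e' x y.
Proof. by move=> ee' [k k0 H]; exists k => //; apply: dchain_sub H. Qed.

Lemma chain_rel_trans x y z :
  chain_rel f x y -> chain_rel f y z -> chain_rel f x z.
Proof.
rewrite !chain_relP => xy yz e e0; exact: reach_trans (xy e e0) (yz e e0).
Qed.

Lemma chain_rel_succr x y : chain_rel f x y -> chain_rel f x (f y).
Proof.
rewrite !chain_relP => xy e e0.
by apply: reach_trans (xy e e0) (reach1 _); rewrite mdistxx ltW.
Qed.

(* Followed by a cycle at y, a chain from x has the form x, w1, w2, ...; by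
   continuity at f x, the point f x can jump directly to w2. *)
Lemma chain_rel_succl x y : continuous f ->
  chain_rel f x y -> chain_rel f y y -> chain_rel f (f x) y.
Proof.
move=> hf /chain_relP xy /chain_relP yy; apply/chain_relP => e e0.
have e2 : 0 < e / 2 by rewrite divr_gt0.
have [r r0 Hr] := continuous_mdist_lt hf (f x) e2.
pose e' := Num.min (e / 2) (r / 2).
have e'0 : 0 < e' by rewrite lt_min e2 divr_gt0.
have e'e : e' <= e / 2 by rewrite ge_min lexx.
have e'r : e' < r by rewrite gt_min; apply/orP; right; lra.
have [k k0 Hk] := xy e' e'0; have [k2 k20 Hk2] := yy e' e'0.
have := dchain_cat Hk Hk2; case E: (k + k2)%N => [|[|j]]; [lia|lia|].
move=> /dchain_first [w1 [_ xw1 /dchain_first [w2 [_ w1w2 Hw2]]]].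
exists j.+1 => //; apply: dchain_cons (dchain_sub _ _ Hw2) => //; last first.
  by apply: le_trans e'e _; lra.
have := metric_triangle (f (f x)) (f w1) w2.
have := Hr _ (le_lt_trans xw1 e'r); lra.
Qed.

Lemma dchain_near_ends y e : continuous f -> 0 < e -> exists2 r, 0 < r &
  forall s s' A x k, d y s < r -> d y s' < r -> A s' ->
  (dchain A (e / 2) x s k.+1 -> dchain A e x s' k.+1) /\
  (dchain A (e / 2) s x k.+1 -> dchain A e s' x k.+1).
Proof.
move=> hf e0; have e4 : 0 < e / 4 by rewrite divr_gt0.
have [r1 r10 Hr1] := continuous_mdist_lt hf y e4.
exists (Num.min r1 (e / 4)) => [|s s' A x k]; first by rewrite lt_min r10 e4.
rewrite !lt_min => /andP [ys1 ys2] /andP [ys'1 ys'2] As'.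
split=> H; rewrite [E in dchain _ E]splitr.
  apply: dchain_move_last H As' _.
  have := metric_triangle s y s'; rewrite (metric_sym s y); lra.
apply: dchain_move_first H As' _.
have := metric_triangle (f s') (f y) (f s); rewrite (metric_sym (f s') (f y)).
have := Hr1 _ ys1; have := Hr1 _ ys'1; lra.
Qed.

Lemma dchain_through c e x y k : reach e c x -> reach e y c ->
  dchain setT e x y k -> dchain [set w | reach e c w /\ reach e w c] e x y k.
Proof.
move=> cx yc H; elim: H cx yc => [x0 _ cx0 x0c|x0 w z k0 Hw IH _ wz cx0 zc].
  by apply: dchain0.
have cz : reach e c z.
  by apply: reach_trans cx0 _; exists k0.+1 => //; apply: dchainS Hw I wz.
exact: dchainS (IH cx0 (reach_trans (reach1 wz) zc)) (conj cz zc) wz.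
Qed.

(* Every point is replaced by its approximant in A; each step errs by at most
   [g + g]. *)
Lemma dchain_shadow (A Q : set X) e g x y k : 0 < g ->
  (forall w, Q w -> exists w', [/\ A w', d w w' < g & d (f w) (f w') < g]) ->
  A x -> A y -> dchain Q e x y k -> dchain A (e + g + g) x y k.
Proof.
move=> g0 nearA Ax Ay H.
suff Hs : forall y', A y' -> (k = 0%N -> y' = y) -> d y y' < g ->
    d (f y) (f y') < g -> dchain A (e + g + g) x y' k.
  by apply: Hs => //; rewrite mdistxx.
clear Ay; elim: H Ax => [x0 _ Ax0 y' _ /(_ erefl) -> _ _|
  x0 w z k0 Hw IH _ wz Ax0 y' Ay' _ zy' fzy'].
  exact: dchain0 Ax0.
have [w' [[Aw' ww' fww'] w'w]] : exists w',
    [/\ A w', d w w' < g & d (f w) (f w') < g] /\ (k0 = 0%N -> w' = w).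
  case: k0 Hw IH => [|k0] Hw _.
    by rewrite -(dchain0_eq Hw); exists x0; rewrite !mdistxx; do !split.
  by have [w' ?] := nearA w (dchain_ends Hw).2; exists w'.
apply: dchainS (IH Ax0 w' Aw' w'w ww' fww') Ay' _.
have := metric_triangle (f w') (f w) y'; have := metric_triangle (f w) z y'.
rewrite (metric_sym (f w') (f w)); lra.
Qed.

End DeltaChains.
Arguments dchain0 {R X f A e x}.

Lemma is_gcd_set_exists (L : set nat) : exists m, is_gcd_set L m.
Proof.
case: (pselect (exists2 k, L k & (0 < k)%N)) => [[k0 Lk0 k0pos]|L0]; last first.
  exists 0%N; split=> [k Lk|m' _]; last exact: dvdn0.
  rewrite dvd0n; apply: contrapT => knz; apply: L0; exists k => //.
  by rewrite lt0n; apply/negP.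
pose cd (i : 'I_k0.+1) := `[< forall k, L k -> (i %| k)%N >].
exists (\big[lcmn/1%N]_(i | cd i) (i : nat)); split.
  by move=> k Lk; apply/dvdn_biglcmP => i /asboolP; apply.
move=> m' Hm'; have m'k0 : (m' < k0.+1)%N by rewrite ltnS dvdn_leq // Hm'.
by apply: (biglcmn_sup (Ordinal m'k0)) => //; apply/asboolP.
Qed.

Lemma is_gcd_set_uniq L m1 m2 : is_gcd_set L m1 -> is_gcd_set L m2 -> m1 = m2.
Proof.
move=> [H1 H1'] [H2 H2']; apply/eqP; rewrite eqn_dvd.
by rewrite (H2' _ H1) (H1' _ H2).
Qed.

(* g is the least positive difference (b + g) - b of two elements of S.  If
   b = c * g and k = (c + q) * c + i with i < c, then
   k * g = q * b + (c - i) * b + i * (b + g). *)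
Lemma nat_submonoid_multiples (S : set nat) :
  S 0%N -> (forall a b, S a -> S b -> S (a + b)%N) ->
  exists g, (forall s, S s -> (g %| s)%N) /\
    exists M, forall k, (M <= k)%N -> S (k * g)%N.
Proof.
move=> S0 SD; have SM a k : S a -> S (k * a)%N.
  by move=> Sa; elim: k => [|k IH]; rewrite ?mul0n // mulSn; apply: SD.
case: (pselect (exists g b, [/\ S b, S (b + g)%N & (0 < g)%N])) => [hg|none];
    last first.
  exists 0%N; split=> [s Ss|]; last by exists 0%N => k _; rewrite muln0.
  rewrite dvd0n; apply: contrapT => s0; apply: none; exists s, 0%N.
  by split; rewrite ?add0n // lt0n; apply/negP.
pose P g := `[< exists b, S b /\ S (b + g)%N >] && (0 < g)%N.
have exP : exists g, P g.
  have [g [b [Sb Sbg g0]]] := hg; exists g.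
  by rewrite /P g0 andbT; apply/asboolP; exists b.
case: (ex_minnP exP) => g /andP [/asboolP [b [Sb Sbg]] g0] gmin.
have gS s : S s -> (g %| s)%N.
  move=> Ss; apply/negPn/negP; rewrite /dvdn -lt0n => r0.
  have Sq : S (s %/ g * (b + g) + s %% g)%N.
    have -> : (s %/ g * (b + g) + s %% g = s %/ g * b + s)%N.
      by rewrite mulnDr -addnA -divn_eq.
    by apply: SD => //; apply: SM.
  have /gmin : P (s %% g)%N.
    rewrite /P r0 andbT; apply/asboolP; exists (s %/ g * (b + g))%N.
    by split => //; apply: SM.
  by rewrite leqNgt ltn_pmod.
exists g; split => //.
have [c bcg] := dvdnP (gS _ Sb); subst b.
have [c0|c0] := posnP c.
  by exists 0%N => k _; apply: SM; rewrite c0 mul0n add0n in Sbg.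
exists (c * c)%N => k kc.
have [q [i [-> ic]]] : exists q i, k = ((c + q) * c + i)%N /\ (i < c)%N.
  exists (k %/ c - c)%N, (k %% c)%N; split; last by rewrite ltn_pmod.
  by rewrite subnKC ?leq_div2r -?divn_eq // leq_divRL.
have [i' ci] : exists i', c = (i + i').+1 by exists (c - i.+1)%N; lia.
have -> : (((c + q) * c + i) * g =
    q * (c * g) + (i'.+1 * (c * g) + i * (c * g + g)))%N.
  by rewrite ci; ring.
exact: SD _ _ (SM _ q Sb) (SD _ _ (SM _ _ Sb) (SM _ _ Sbg)).
Qed.

Section DistanceConvergence.
Context {R : realType} {X : metricType R}.
Local Notation d := (@mdist R X).

Lemma dist_set_ge0 (p : X) A : 0 <= dist_set p A.
Proof.
rewrite /dist_set; case: (pselect (exists a, A a)) => [[a Aa]|nA].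
  apply: lb_le_inf; first by exists (d p a); exists a.
  by move=> _ [b _ <-]; apply: mdist_ge0.
have -> : [set d p a | a in A] = set0.
  by apply/seteqP; split => // z [a Aa _]; apply: nA; exists a.
by rewrite inf0.
Qed.

Lemma dist_set_le (p q : X) A : dist_set p A <= d p q + dist_set q A.
Proof.
rewrite /dist_set; case: (pselect (exists a, A a)) => [[a Aa]|nA]; last first.
  have E z : [set d z a | a in A] = set0.
    by apply/seteqP; split => // u [a Aa _]; apply: nA; exists a.
  by rewrite !E inf0 addr0 mdist_ge0.
rewrite addrC -lerBlDr; apply: lb_le_inf; first by exists (d q a); exists a.
move=> _ [b Ab <-]; rewrite lerBlDr.
have lb : has_lbound [set d p a | a in A].
  by exists 0 => _ [c _ <-]; apply: mdist_ge0.
apply: (le_trans (ge_inf lb _)); first by exists b.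
by rewrite addrC; apply: metric_triangle.
Qed.

Lemma dist_set_lt (p : X) A (e : R) : (exists a, A a) -> dist_set p A < e ->
  exists a, A a /\ d p a < e.
Proof.
move=> [a Aa] /(inf_lt (ex_intro _ (d p a) (ex_intro2 _ _ a Aa erefl))).
by move=> [_ [b Ab <-] lt]; exists b.
Qed.

Lemma cvg0_lt (u : nat -> R) : u @ \oo --> (0 : R) -> forall e, 0 < e ->
  exists N, forall i, (N <= i)%N -> u i < e.
Proof.
move=> /cvgrPdist_lt H e e0; have [N _ HN] := H e e0; exists N => i Ni.
by have := HN i Ni; rewrite sub0r normrN; apply: le_lt_trans (ler_norm _).
Qed.

Lemma cvg0_nonneg (u : nat -> R) : (forall i, 0 <= u i) ->
  (forall e, 0 < e -> exists N, forall i, (N <= i)%N -> u i < e) ->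
  u @ \oo --> (0 : R).
Proof.
move=> u0 H; apply/cvgrPdist_lt => e e0; have [N HN] := H e e0.
by exists N => // i /= Ni; rewrite sub0r normrN ger0_norm //; apply: HN.
Qed.

Lemma cvg0_le_add (u v w : nat -> R) : (forall i, 0 <= u i) ->
  (forall i, u i <= v i + w i) -> v @ \oo --> (0 : R) -> w @ \oo --> (0 : R) ->
  u @ \oo --> (0 : R).
Proof.
move=> u0 uvw v0 w0; apply: cvg0_nonneg => // e e0.
have e2 : 0 < e / 2 by rewrite divr_gt0.
have [N1 H1] := cvg0_lt v0 e2; have [N2 H2] := cvg0_lt w0 e2.
exists (maxn N1 N2) => i Ni; have := uvw i.
have := H1 i (leq_trans (leq_maxl _ _) Ni).
have := H2 i (leq_trans (leq_maxr _ _) Ni); lra.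
Qed.

End DistanceConvergence.

Section ChainComponent.
Context {R : realType} {X : metricType R} (f : X -> X).
Context (hf : continuous f) (hX : compact [set: X]).
Context (C : set X) (xc : X) (hxc : CR f xc)
  (hC : C = [set y | CR f y /\ chain_rel f xc y /\ chain_rel f y xc]).
Local Notation d := (@mdist R X).
Local Notation reach := (reach f).
Local Notation dchain := (dchain f).

Lemma componentP y : C y <->
  (forall e, 0 < e -> reach e xc y) /\ (forall e, 0 < e -> reach e y xc).
Proof.
rewrite hC /= -!chain_relP; split=> [[_ //]|[xcy yxc]].
by split => //; apply: chain_rel_trans yxc xcy.
Qed.

Lemma component_reach a b e : C a -> C b -> 0 < e -> reach e a b.
Proof.
move=> /componentP [_ axc] /componentP [xcb _] e0.
exact: reach_trans (axc e e0) (xcb e e0).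
Qed.

Lemma component_succ c : C c -> C (f c).
Proof.
rewrite hC => -[_ [xcc cxc]]; have fcxc := chain_rel_succl hf cxc hxc.
split; first exact: chain_rel_trans fcxc (chain_rel_succr xcc).
by split => //; apply: chain_rel_succr.
Qed.

Lemma component_iter c i : C c -> C (iter i f c).
Proof.
by move=> Cc; elim: i => [//|i IH]; rewrite iterS; apply: component_succ.
Qed.

Lemma near_component g : 0 < g -> exists2 e, 0 < e & forall s,
  reach e xc s -> reach e s xc ->
  exists c, [/\ C c, d s c < g & d (f s) (f c) < g].
Proof.
move=> g0; pose near_C s := exists c, [/\ C c, d s c < g & d (f s) (f c) < g].
have [k Hk] : exists k, forall s,
    near_C s \/ ~ (reach k.+1%:R^-1 xc s /\ reach k.+1%:R^-1 s xc).
  apply: compact_monotone_cover => // [k k' s kk' [|nr]|y]; [by left|right|].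
    have le : (k'.+1%:R^-1 : R) <= k.+1%:R^-1.
      by rewrite lef_pV2 ?posrE ?ltr0n // ler_nat ltnS.
    by move=> [xcs sxc]; apply: nr; split; apply: reach_le le _.
  case: (pselect (C y)) => Cy.
    have [r r0 Hr] := continuous_mdist_lt hf y g0.
    exists 0%N, (Num.min r g) => [|s]; first by rewrite lt_min r0 g0.
    rewrite lt_min => /andP [ys yg]; left; exists y.
    by split => //; rewrite metric_sym //; apply: Hr.
  have [e e0 ne] : exists2 e, 0 < e & ~ (reach e xc y /\ reach e y xc).
    apply: contrapT => nH; apply: Cy; apply/componentP.
    by split => e e0; apply: contrapT => h; apply: nH; exists e => // -[].
  have e2 : 0 < e / 2 by rewrite divr_gt0.
  have [k _ /(_ k (leqnn k)) /ltW ke] := near_infty_natSinv_lt (PosNum e2).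
  have [r r0 Hr] := dchain_near_ends y hf e0.
  exists k, r => // s ys; right => -[[j j0 Hj] [l l0 Hl]]; apply: ne.
  have yy : d y y < r by rewrite mdistxx.
  case: j j0 Hj => // j _ /(dchain_sub (subsetT setT) ke) Hj.
  case: l l0 Hl => // l _ /(dchain_sub (subsetT setT) ke) Hl.
  split; first by exists j.+1 => //; apply: (Hr s y setT xc j ys yy I).1.
  by exists l.+1 => //; apply: (Hr s y setT xc l ys yy I).2.
exists k.+1%:R^-1 => [|s xcs sxc]; first by rewrite invr_gt0 ltr0n.
by case: (Hk s) => // -[].
Qed.

Lemma component_dchain a b del : C a -> C b -> 0 < del ->
  exists2 k, (0 < k)%N & dchain C del a b k.
Proof.
move=> Ca Cb del0; have g0 : 0 < del / 3 by rewrite divr_gt0.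
have [e e0 He] := near_component g0.
pose e' := Num.min e (del / 3).
have e'0 : 0 < e' by rewrite lt_min e0 g0.
have e'e : e' <= e by rewrite ge_min lexx.
have e'g : e' <= del / 3 by rewrite ge_min lexx orbT.
have [k k0 Hk] := component_reach Ca Cb e'0; exists k => //.
have [[xca _] [_ bxc]] := (iffLR (componentP a) Ca, iffLR (componentP b) Cb).
have nearC w : reach e' xc w /\ reach e' w xc ->
    exists c, [/\ C c, d w c < del / 3 & d (f w) (f c) < del / 3].
  by move=> [xcw wxc]; apply: He; apply: reach_le e'e _.
have := dchain_through (xca _ e'0) (bxc _ e'0) Hk.
by move/(dchain_shadow g0 nearC Ca Cb); apply: dchain_sub => //; lra.
Qed.

Lemma component_dchain_bounded h del : C h -> 0 < del ->
  exists L, forall w, C w ->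
  (exists l, [/\ (0 < l)%N, (l <= L)%N & dchain C del h w l]) /\
  (exists l, [/\ (0 < l)%N, (l <= L)%N & dchain C del w h l]).
Proof.
move=> Ch del0; apply: compact_monotone_cover => // [L L' w LL' H Cw|y].
  have [[l [l0 lL hw]] [l' [l'0 l'L wh]]] := H Cw.
  by split; [exists l|exists l']; split => //; apply: leq_trans LL'.
have [r r0 Hr] := dchain_near_ends y hf del0.
case: (pselect (exists2 c, C c & d y c < r)) => [[c Cc yc]|nc]; last first.
  by exists 0%N, r => // w yw Cw; exfalso; apply: nc; exists w.
have d2 : 0 < del / 2 by rewrite divr_gt0.
have [[|l1] // _ H1] := component_dchain Ch Cc d2.
have [[|l2] // _ H2] := component_dchain Cc Ch d2.
exists (maxn l1.+1 l2.+1), r => // w yw Cw.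
split; [exists l1.+1; rewrite leq_maxl|exists l2.+1; rewrite leq_maxr].
  by split => //; exact: (Hr c w C h l1 yc yw Cw).1.
by split => //; exact: (Hr c w C h l2 yc yw Cw).2.
Qed.

End ChainComponent.

Section CycleLengths.
Context {R : realType} {X : metricType R} (f : X -> X).
Context (hf : continuous f) (hX : compact [set: X]).
Context (C : set X) (xc : X) (hxc : CR f xc)
  (hC : C = [set y | CR f y /\ chain_rel f xc y /\ chain_rel f y xc]).
Context (D : set X) (xd : X) (Cxd : C xd)
  (hD : D = [set y | C y /\ forall del : R, 0 < del -> sim_Cd f C del xd y]).
Local Notation d := (@mdist R X).
Local Notation dchain := (dchain f).

Lemma gcd_dvd_cycle del m x l : is_gcd_set (cycle_lengths f C del) m ->
  dchain C del x x l -> (m %| l)%N.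
Proof.
move=> [hm _]; case: l => [|l] H; first exact: dvdn0.
have [s [Hs s0 sl]] := dchain_chain_in (ltn0Sn l) H.
by apply: hm; exists s; rewrite s0 sl.
Qed.

Lemma sim_Cd_dchain del m x y : is_gcd_set (cycle_lengths f C del) m ->
  sim_Cd f C del x y -> exists2 k, (m %| k)%N & dchain C del x y k.
Proof.
move=> hm [m' [hm' [s [k [Hs [<- [<- m'k]]]]]]].
by exists k; [rewrite -(is_gcd_set_uniq hm' hm) | exact: chain_in_dchain].
Qed.

Lemma D_base : D xd.
Proof.
rewrite hD; split => // del del0.
have [m hm] := is_gcd_set_exists (cycle_lengths f C del).
have [k k0 Hk] := component_dchain hf hX hC Cxd Cxd del0.
have [s [Hs s0 sk]] := dchain_chain_in k0 Hk.
exists m; split => //; exists s, k; do !split => //.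
by apply: hm.1; exists s; rewrite s0 sk.
Qed.

Lemma D_delta_base del : 0 < del -> D_delta f C D del xd.
Proof.
move=> del0; split => //; exists xd; split; first exact: D_base.
by move: D_base; rewrite {1}hD => -[_]; apply.
Qed.

Lemma D_delta_dchain del m p :
  0 < del -> is_gcd_set (cycle_lengths f C del) m ->
  D_delta f C D del p -> exists2 k, (m %| k)%N & dchain C del xd p k.
Proof.
move=> del0 hm [_ [a [Da ap]]]; move: Da; rewrite hD => -[_ /(_ del del0) xda].
have [k1 m1 H1] := sim_Cd_dchain hm xda; have [k2 m2 H2] := sim_Cd_dchain hm ap.
by exists (k1 + k2)%N; [apply: dvdn_add | apply: dchain_cat H1 H2].
Qed.

Lemma large_cycles del m : 0 < del -> is_gcd_set (cycle_lengths f C del) m ->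
  (0 < m)%N /\ exists M, forall k, (M <= k)%N -> dchain C del xd xd (k * m).
Proof.
move=> del0 hm.
have [g [gS [M HM]]] := nat_submonoid_multiples (S := dchain C del xd xd)
  (dchain0 Cxd) (@dchain_cat _ _ f C del xd xd xd).
have [k0 k0pos Hk0] := component_dchain hf hX hC Cxd Cxd del0.
have m0 : (0 < m)%N.
  have := gcd_dvd_cycle hm Hk0; rewrite lt0n; apply: contraTneq => ->.
  by rewrite dvd0n -lt0n.
have [c mcg] : exists c, m = (c * g)%N.
  apply/dvdnP/hm.2 => k [s [Hs s0k]].
  have := chain_in_dchain Hs; rewrite -s0k => Hc.
  have [Cs0 _] := dchain_ends Hc.
  have [a _ Ha] := component_dchain hf hX hC Cxd Cs0 del0.
  have [b _ Hb] := component_dchain hf hX hC Cs0 Cxd del0.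
  have gab := gS _ (dchain_cat Ha Hb).
  have := gS _ (dchain_cat (dchain_cat Ha Hc) Hb).
  by rewrite -addnA addnCA (dvdn_addl _ gab).
split=> //; exists M => k kM; rewrite mcg mulnA; apply: HM.
have c0 : (0 < c)%N by move: m0; rewrite mcg muln_gt0 => /andP [].
by rewrite (leq_trans kM) // leq_pmulr.
Qed.

(* Enter xd from f^N(p), wind around xd along a large cycle, and leave xd for
   f^T(q): the congruences mod m make the total length exactly T - N. *)
Lemma D_delta_dchain_exact del : 0 < del -> exists2 K, (0 < K)%N &
  forall N T p q, D_delta f C D del p -> D_delta f C D del q ->
  (N + K <= T)%N -> dchain C del (iter N f p) (iter T f q) (T - N).
Proof.
move=> del0; have [m hm] := is_gcd_set_exists (cycle_lengths f C del).
have [m0 [M HM]] := large_cycles del0 hm.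
have [L HL] := component_dchain_bounded hf hX hC Cxd del0.
exists (L + L + M * m).+1 => // N T p q Dp Dq NT.
have [P mP hP] := D_delta_dchain del0 hm Dp.
have [Q mQ hQ] := D_delta_dchain del0 hm Dq.
have [[_ Cp] [_ Cq]] := (dchain_ends hP, dchain_ends hQ).
have orbit x i : C x -> dchain C del x (iter i f x) i.
  move=> Cx; apply: dchain_orbit => [|j _]; first exact: ltW.
  exact: (component_iter hf hxc hC).
have [_ [al [_ alL hal]]] := HL _ (component_iter hf hxc hC N Cp).
have [[be [_ beL hbe]] [ga [_ _ hga]]] := HL _ (component_iter hf hxc hC T Cq).
have r1 := gcd_dvd_cycle hm (dchain_cat (dchain_cat hP (orbit p N Cp)) hal).
have r2 := gcd_dvd_cycle hm (dchain_cat (dchain_cat hQ (orbit q T Cq)) hga).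
have r3 := gcd_dvd_cycle hm (dchain_cat hbe hga).
have [Z [TZ ZMM]] : exists Z, (T - N = al + Z + be)%N /\ (M * m <= Z)%N.
  exists (T - N - al - be)%N; move: (M * m)%N NT alL beL => MM.
  by clear; split; lia.
have mZ : (m %| Z)%N.
  have E : (Z + ((P + N + al) + ((be + ga) + Q)) = (Q + T + ga) + P)%N.
    by move: TZ NT; clear; lia.
  have rest : (m %| (P + N + al) + ((be + ga) + Q))%N.
    exact: dvdn_add r1 (dvdn_add r3 mQ).
  by rewrite -(dvdn_addl Z rest) E; apply: dvdn_add.
have [z Zz] := dvdnP mZ.
have zM : (M <= z)%N by rewrite -(leq_pmul2r m0) -Zz.
by rewrite TZ Zz; apply: dchain_cat (dchain_cat hal (HM _ zM)) hbe.
Qed.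

Lemma Vs_dchain_orbit del y z : 0 < del -> Vs f C D y -> Vs f C D z ->
  exists T, dchain setT del y (iter T f z) T.
Proof.
move=> del0 [_ Vy] [_ Vz]; have d2 : 0 < del / 2 by rewrite divr_gt0.
have [K K0 HK] := D_delta_dchain_exact d2.
have [Iy HIy] := cvg0_lt (Vy _ d2) d2.
have [Iz HIz] := cvg0_lt (Vz _ d2) d2.
have Dne i : exists a, (iter i f @` D_delta f C D (del / 2)) a.
  by exists (iter i f xd); exists xd => //; apply: D_delta_base.
have [_ [[p Dp <-] yp]] := dist_set_lt (Dne Iy.+1) (HIy _ (leqnSn _)).
pose T := maxn (Iy.+1 + K) Iz.
have [_ [[q Dq <-] zq]] := dist_set_lt (Dne T) (HIz T (leq_maxr _ _)).
exists T.
have H1 : dchain setT del y (iter Iy.+1 f p) Iy.+1.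
  apply: dchainS (dchain_orbit _ _) I _ => //; first exact: ltW.
  by rewrite -iterS; apply: le_trans (ltW yp) _; lra.
have H2 : dchain setT del (iter Iy.+1 f p) (iter T f z) (T - Iy.+1).
  have := HK Iy.+1 T p q Dp Dq (leq_maxl _ _).
  have : (0 < T - Iy.+1)%N by rewrite /T; lia.
  case: (T - Iy.+1)%N => // t _ Hc.
  rewrite [del]splitr.
  apply: dchain_move_last (dchain_sub (subsetT C) (lexx _) Hc) I _.
  by rewrite metric_sym ltW.
by have := dchain_cat H1 H2; rewrite subnKC // /T; lia.
Qed.

End CycleLengths.

Section AsymptoticPairs.
Context {R : realType} {X : metricType R} (f : X -> X).
Local Notation d := (@mdist R X).

Definition asymptotic x z :=
  (fun i => d (iter i f x) (iter i f z)) @ \oo --> (0 : R).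

Lemma Vs_asymptotic C D x z : Vs f C D z -> asymptotic x z -> Vs f C D x.
Proof.
move=> [Wz Vz] xz; split => [|del del0].
  by apply: cvg0_le_add xz Wz => // i; [exact: dist_set_ge0|exact: dist_set_le].
apply: cvg0_le_add xz (Vz del del0) => // i.
  exact: dist_set_ge0.
exact: dist_set_le.
Qed.

(* A delta-chain from y to f^T(z), continued along the orbit of f^T(z), is a
   delta-limit-pseudo orbit. *)
Lemma s_limit_shadowing_dchain : s_limit_shadowing f -> forall eps, 0 < eps ->
  exists2 del, 0 < del & forall y z T, dchain f setT del y (iter T f z) T ->
  exists x, d x y <= eps /\ asymptotic x z.
Proof.
move=> hsh eps eps0; have [del del0 Hsh] := hsh eps eps0.
exists del => // y z T /dchain_seq [s [s0 sT _ sd]].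
pose xs i := if (i <= T)%N then s i else iter i f z.
have xsT i : (T <= i)%N -> xs i = iter i f z.
  move=> Ti; rewrite /xs; have [iT|//] := leqP i T.
  by have -> : i = T by apply/eqP; rewrite eqn_leq iT Ti.
have xs0 i : (T <= i)%N -> d (f (xs i)) (xs i.+1) = 0.
  by move=> Ti; rewrite !xsT ?(leqW Ti) // iterS mdistxx.
have xsdel i : d (f (xs i)) (xs i.+1) <= del.
  case: (ltnP i T) => iT; last by rewrite xs0 // ltW.
  by rewrite /xs iT (ltnW iT); apply: sd.
have [|x [xeps xasym]] := Hsh xs xsdel.
  by apply: cvg0_nonneg => [i|e e0]; [exact: mdist_ge0|exists T => i /xs0 ->].
exists x; split; first by have := xeps 0%N; rewrite /xs leq0n s0.
apply: cvg0_nonneg => [i|e e0]; first exact: mdist_ge0.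
have [N HN] := cvg0_lt xasym e0; exists (maxn N T) => i.
rewrite geq_max => /andP [Ni Ti]; rewrite -xsT //; exact: HN.
Qed.

Lemma asymptotic_T_f_tail n (x : 'I_n -> X) z :
  (forall j, asymptotic (x j) z) ->
  forall eps, 0 < eps -> exists M, forall i, (M <= i)%N -> T_f f x eps i.
Proof.
move=> xz eps eps0; have e2 : 0 < eps / 2 by rewrite divr_gt0.
have /choice [N HN] : forall j, exists N, forall i, (N <= i)%N ->
    d (iter i f (x j)) (iter i f z) < eps / 2.
  by move=> j; exact: cvg0_lt (xz j) _ e2.
exists (\max_j N j)%N => i Mi j k _.
have := HN j i (leq_trans (leq_bigmax j) Mi).
have := HN k i (leq_trans (leq_bigmax k) Mi).
have := metric_triangle (iter i f (x j)) (iter i f z) (iter i f (x k)).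
rewrite (metric_sym (iter i f z)); lra.
Qed.

End AsymptoticPairs.

Lemma full_family_tail (G : set (set nat)) :
  furstenberg_family G -> full_family G -> forall M, G [set i | (M <= i)%N].
Proof.
move=> [[A GA] [_ Gup]] Gfull M.
by apply: Gup (Gfull _ (Gup _ _ GA (subsetT A)) M) _ => i [].
Qed.

Unset Implicit Arguments.

Theorem theorem1p1 (R : realType) (X : metricType R) (f : X -> X)
  (C D : set X) (G : set (set nat)) (n : nat) :
  compact [set: X] -> continuous f -> s_limit_shadowing f ->
  chain_component f C -> in_DC f C D ->
  furstenberg_family G -> full_family G -> (2 <= n)%N ->
  let V := Vs f C D in
  let B := [set x : 'I_n -> X | (forall j, V (x j)) /\
              forall eps : R, 0 < eps -> G (T_f f x eps)] in
  (* B is a subset of V^n ... *)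
  (forall x, B x -> forall j, V (x j)) /\
  (* ... and B is dense in V^n (for the product, i.e. max, metric) *)
  (forall y : 'I_n -> X, (forall j, V (y j)) ->
     forall r : R, 0 < r -> exists2 x, B x & forall j, mdist (x j) (y j) < r).
Proof.
move=> hX hf hsh [xc [hxc hC]] [xd [Cxd hD]] hG Gfull n2 V B.
split=> [x [] //|y Vy r r0].
have r2 : 0 < r / 2 by rewrite divr_gt0.
have [del del0 Hsh] := s_limit_shadowing_dchain hsh r2.
pose j0 : 'I_n := Ordinal (leq_trans (isT : (0 < 2)%N) n2).
pose z := y j0.
have near_y j : exists x, [/\ mdist x (y j) < r, V x & asymptotic f x z].
  have [T HT] := Vs_dchain_orbit hf hX hxc hC Cxd hD del0 (Vy j) (Vy j0).
  have [x [xy xz]] := Hsh _ _ _ HT.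
  by exists x; split; [lra | exact: Vs_asymptotic (Vy j0) xz |].
have [x Hx] := choice near_y.
exists x => [|j]; last by case: (Hx j).
split=> [j|eps eps0]; first by case: (Hx j).
have xz j : asymptotic f (x j) z by case: (Hx j).
have [M HM] := asymptotic_T_f_tail xz eps0.
have [_ [_ Gup]] := hG.
exact: Gup (full_family_tail hG Gfull M) HM.
Qed.
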